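(* Let $G$ be a graph of order $n\ge 2$. Then $\gamma^{SLD}(G)=n$ if and only if every maximal vertex of the vicinal preorder of $G$ has a twin.
   Context: All graphs are finite, simple and undirected (not necessarily connected). For $u\in V$, $N(u)$ is the set of neighbours of $u$ and $N[u]=N(u)\cup\{u\}$. A code is a non-empty subset $C\subseteq V$; $I(C;u)=N[u]\cap C$. A code $C$ is self-locating-dominating if for every $u\in V\setminus C$ we have $I(C;u)\neq\emptyset$ and $\bigcap_{c\in I(C;u)}N[c]=\{u\}$; $\gamma^{SLD}(G)$ is the minimum size of such a code. The vicinal preorder $\lesssim$ on $V(G)$ is defined by $x\lesssim y$ iff $N(x)\subseteq N[y]$. Write $x<y$ if $x\lesssim y$ and not $y\lesssim x$. A vertex $x$ is maximal if there is no vertex $y$ with $x<y$. Distinct vertices $u,v$ are twins if $N(u)=N(v)$ (false twins) or $N[u]=N[v]$ (true twins). *)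

From mathcomp Require Import all_boot.
Set Implicit Arguments. Unset Strict Implicit. Unset Printing Implicit Defensive.

Definition simple_graph (T : finType) (e : rel T) : Prop :=
  symmetric e /\ irreflexive e.

Section SLD.
Variables (T : finType) (e : rel T).

Definition onbhd (u : T) : {set T} := [set v | e u v].
Definition cnbhd (u : T) : {set T} := u |: onbhd u.

Definition Icode (C : {set T}) (u : T) : {set T} := cnbhd u :&: C.

Definition is_SLD (C : {set T}) : bool :=
  (C != set0) &&
  [forall u, (u \notin C) ==>
     ((Icode C u != set0) &&
      ((\bigcap_(c in Icode C u) cnbhd c) == [set u]))].

(* gamma^SLD(G): minimum size of an SLD code (V itself is always one). *)
Definition gammaSLD : nat :=
  \big[minn/#|T|]_(C : {set T} | is_SLD C) #|C|.

Definition vic_le (x y : T) : bool := onbhd x \subset cnbhd y.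
Definition vic_lt (x y : T) : bool := vic_le x y && ~~ vic_le y x.
Definition vic_maximal (x : T) : bool := [forall y, ~~ vic_lt x y].

Definition twins (u v : T) : bool :=
  (u != v) && ((onbhd u == onbhd v) || (cnbhd u == cnbhd v)).
Definition has_twin (u : T) : bool := [exists v, twins u v].

End SLD.

From mathcomp Require Import all_boot order.
Import Order.TTheory.

Set Implicit Arguments.
Unset Strict Implicit.
Unset Printing Implicit Defensive.

(* Removing a single vertex [x] from [V] leaves a self-locating-dominating code
   exactly when no other vertex [v] satisfies [x ≲ v]: the only vertex to be
   located is [x], whose code neighbourhood is [N(x)], and a vertex [v] lies in
   every [N[c]], [c ∈ N(x)], iff [N(x) ⊆ N[v]].  Since supersets of
   self-locating-dominating codes are again such codes, [γ^SLD = n] iff every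
   vertex [x] has some [v ≠ x] above it.  Every vertex lies below a maximal one,
   and for a maximal [x] the relation [x ≲ v] forces [v ≲ x], which makes [x]
   and [v] twins (closed twins if adjacent, open twins otherwise). *)

Section GammaSLD.
Variables (T : finType) (e : rel T).

Lemma gammaSLD_le_card (C : {set T}) : is_SLD e C -> gammaSLD e <= #|C|.
Proof.
by move=> SC; have := bigmin_le_cond #|T| (fun C : {set T} => #|C|) SC;
  rewrite minEnat.
Qed.

Lemma gammaSLD_eq_card :
  gammaSLD e = #|T| <-> (forall C : {set T}, is_SLD e C -> #|T| <= #|C|).
Proof.
split=> [<-|ge_card]; first exact: gammaSLD_le_card.
apply/anti_leq/andP; split.
  have := bigmin_le_id (index_enum _) #|T| (is_SLD e) (fun C : {set T} => #|C|).
  by rewrite minEnat.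
by have := le_bigmin (index_enum _) (lexx #|T|) ge_card; rewrite minEnat.
Qed.

End GammaSLD.

Section SimpleGraph.
Variables (T : finType) (e : rel T).
Hypotheses (e_sym : symmetric e) (e_irr : irreflexive e).

Lemma in_onbhd u a : (a \in onbhd e u) = e u a.
Proof. by rewrite inE. Qed.

Lemma in_cnbhd u a : (a \in cnbhd e u) = (a == u) || e u a.
Proof. by rewrite !inE. Qed.

Lemma cnbhdC u a : (a \in cnbhd e u) = (u \in cnbhd e a).
Proof. by rewrite !in_cnbhd eq_sym e_sym. Qed.

Lemma card_cnbhd u : #|cnbhd e u| = #|onbhd e u|.+1.
Proof. by rewrite cardsU1 in_onbhd e_irr. Qed.

Lemma vic_le_refl x : vic_le e x x.
Proof. exact: subsetUr. Qed.

Lemma vic_le_trans {x y z} : vic_le e x y -> vic_le e y z -> vic_le e x z.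
Proof.
move=> /subsetP le_xy /subsetP le_yz; apply/subsetP => a xa.
have := le_xy a xa; rewrite in_cnbhd => /predU1P[ay|ya]; last first.
  by apply: le_yz; rewrite in_onbhd.
subst a; have := le_yz x; rewrite in_onbhd e_sym -in_onbhd => /(_ xa).
rewrite in_cnbhd => /predU1P[xz|zx].
  by rewrite -xz in_cnbhd -in_onbhd xa orbT.
by rewrite cnbhdC; apply: le_xy; rewrite in_onbhd e_sym.
Qed.

Lemma cnbhd_subset_adj x v :
  e x v -> vic_le e x v -> cnbhd e x \subset cnbhd e v.
Proof.
move=> xv /subsetP le_xv; apply/subsetP => a.
rewrite in_cnbhd => /predU1P[->|xa].
  by rewrite in_cnbhd e_sym xv orbT.
by apply: le_xv; rewrite in_onbhd.
Qed.

Lemma onbhd_subset_nonadj x v :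
  ~~ e x v -> vic_le e x v -> onbhd e x \subset onbhd e v.
Proof.
move=> nxv /subsetP le_xv; apply/subsetP => a xa.
have := le_xv a xa; rewrite in_cnbhd in_onbhd => /predU1P[av|//].
by move: nxv; rewrite -in_onbhd -av xa.
Qed.

Lemma vic_lt_card x y : vic_lt e x y -> #|onbhd e x| < #|onbhd e y|.
Proof.
case/andP=> le_xy nle_yx; have [xy|nxy] := boolP (e x y).
  rewrite -ltnS -!card_cnbhd; apply: proper_card.
  rewrite properEneq cnbhd_subset_adj // andbT.
  by apply: contraNneq nle_yx => eqC; rewrite /vic_le eqC subsetUr.
apply: proper_card; rewrite properEneq onbhd_subset_nonadj // andbT.
by apply: contraNneq nle_yx => eqO; rewrite /vic_le -eqO subsetUr.
Qed.

Lemma exists_vic_maximal_ge x : exists2 y, vic_le e x y & vic_maximal e y.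
Proof.
case: (@arg_maxnP T x (vic_le e x) (fun y => #|onbhd e y|) (vic_le_refl x)).
move=> y le_xy ymax; exists y => //; apply/forallP => z; apply/negP => lt_yz.
have := ymax z (vic_le_trans le_xy (proj1 (andP lt_yz))).
by rewrite /= leqNgt vic_lt_card.
Qed.

Lemma vic_le_anti_twins x v :
  x != v -> vic_le e x v -> vic_le e v x -> twins e x v.
Proof.
move=> neq_xv le_xv le_vx; rewrite /twins neq_xv /=.
have [xv|nxv] := boolP (e x v).
  by apply/orP; right; rewrite eqEsubset !cnbhd_subset_adj // e_sym.
by apply/orP; left; rewrite eqEsubset !onbhd_subset_nonadj // e_sym.
Qed.

Lemma twins_vic_le x v : twins e x v -> vic_le e x v.
Proof.
case/andP=> _ /orP[] /eqP eqN; rewrite /vic_le; first by rewrite eqN subsetUr.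
by rewrite -eqN subsetUr.
Qed.

Lemma mem_bigcap_cnbhd (A : {set T}) v :
  (v \in \bigcap_(c in A) cnbhd e c) = (A \subset cnbhd e v).
Proof. by apply/bigcapP/subsetP => sub c cA; rewrite cnbhdC sub. Qed.

Lemma is_SLD_superset {C D : {set T}} : is_SLD e C -> C \subset D -> is_SLD e D.
Proof.
case/andP=> C0 /forallP locC sub_CD; apply/andP; split.
  by apply: contraNneq C0 => D0; rewrite -subset0 -D0.
apply/forallP => u; apply/implyP => uD.
have uC : u \notin C by apply: contra uD; apply: subsetP.
have /andP[I0 /eqP capC] := implyP (locC u) uC.
have sub_I : Icode e C u \subset Icode e D u by apply: setIS.
apply/andP; split; first by apply: contraNneq I0 => ID0; rewrite -subset0 -ID0.
rewrite eqEsubset -{1}capC; apply/andP; split.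
  by apply/subsetP => v; rewrite !mem_bigcap_cnbhd; apply: subset_trans.
by rewrite sub1set mem_bigcap_cnbhd subsetIl.
Qed.

Lemma Icode_setC1 x : Icode e (~: [set x]) x = onbhd e x.
Proof.
by apply/setP => a; rewrite !inE; case: eqVneq => [->|]; rewrite ?e_irr ?andbT.
Qed.

Lemma is_SLD_setC1 x : 2 <= #|T| ->
  is_SLD e (~: [set x]) = ~~ [exists v, (v != x) && vic_le e x v].
Proof.
move=> n2; have C0 : ~: [set x] != set0.
  by rewrite -card_gt0 cardsC1 -subn1 subn_gt0.
rewrite /is_SLD C0; apply/forallP/existsPn => [locx v | nle_x u].
  have := implyP (locx x); rewrite !inE eqxx Icode_setC1 => /(_ isT) /andP[_].
  move/eqP/setP/(_ v); rewrite mem_bigcap_cnbhd inE /vic_le => ->.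
  by rewrite andNb.
rewrite !inE negbK; apply/implyP => /eqP->; rewrite Icode_setC1.
apply/andP; split.
  have [v] := set0Pn _ C0; rewrite !inE => vx; have := nle_x v.
  by rewrite vx; apply: contraNneq => Nx0; rewrite /vic_le Nx0 sub0set.
apply/eqP/setP => v; rewrite mem_bigcap_cnbhd inE.
case: eqVneq => [->|vx]; first exact: vic_le_refl.
by apply/negbTE; have := nle_x v; rewrite vx.
Qed.

Lemma gammaSLD_eq_card_setC1 : 2 <= #|T| ->
  gammaSLD e = #|T| <-> (forall x, ~~ is_SLD e (~: [set x])).
Proof.
move=> n2; split=> [/gammaSLD_eq_card ge_card x | nsld].
  apply: contraTN n2 => /ge_card; rewrite cardsC1.
  by case: #|T| => [|n]; rewrite ?ltnn.
apply/gammaSLD_eq_card => C SC.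
have [fullC|] := boolP ([set: T] \subset C).
  by rewrite -cardsT subset_leq_card.
case/subsetPn => x _ xC; have := nsld x; rewrite (is_SLD_superset SC) //.
by apply/subsetP => y yC; rewrite !inE; apply: contraNneq xC => <-.
Qed.

End SimpleGraph.

Theorem mainTheorem5 (T : finType) (e : rel T) :
  simple_graph e -> 2 <= #|T| ->
  (gammaSLD e = #|T| <->
   (forall x : T, vic_maximal e x -> has_twin e x)).
Proof.
move=> [e_sym e_irr] n2.
apply: iff_trans (gammaSLD_eq_card_setC1 e_sym n2) _.
have dominatedE : (forall x, ~~ is_SLD e (~: [set x])) <->
                  (forall x, [exists v, (v != x) && vic_le e x v]).
  by split=> dom x; move: (dom x); rewrite is_SLD_setC1 ?negbK.
apply: iff_trans dominatedE _; split=> [dom x xmax | twin x].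
  have /existsP[v /andP[vx le_xv]] := dom x.
  have le_vx : vic_le e v x.
    by move/forallP/(_ v): xmax; rewrite /vic_lt le_xv negbK.
  by apply/existsP; exists v; apply: vic_le_anti_twins; rewrite // eq_sym.
have [y le_xy ymax] := exists_vic_maximal_ge e_sym e_irr x.
apply/existsP; have [eq_yx|neq_yx] := eqVneq y x.
  subst y; have /existsP[w tw] := twin x ymax; exists w.
  by rewrite eq_sym (proj1 (andP tw)) twins_vic_le.
by exists y; rewrite neq_yx.
Qed.
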